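(* Let $\rho_0,\rho_1,\dots,\rho_n$ be density matrices on a finite-dimensional complex Hilbert space with $\rho_j\rho_0=\rho_0\rho_j=0$ for all $j=1,\dots,n$. Let $p_1,\dots,p_n\ge0$ with $\sum_j p_j=1$, $\epsilon\in[0,1]$, $\sigma_j=\epsilon\rho_0+(1-\epsilon)\rho_j$, $\rho=\sum_j p_j\rho_j$ and $\sigma=\sum_j p_j\sigma_j$. Suppose $\operatorname{tr}(\rho_j^2)\ge\operatorname{tr}(\sigma_j^2)$ for all $j$ and $\operatorname{tr}(\rho^2)\ge\operatorname{tr}(\sigma^2)$. Then $$\sum_{j=1}^n p_j\,\mathcal{F}_2(\rho_j,\sigma_j)=\mathcal{F}_2(\rho,\sigma)=1-\epsilon,$$ where $\mathcal{F}_2(\alpha,\beta)=\operatorname{tr}(\alpha\beta)/\max[\operatorname{tr}(\alpha^2),\operatorname{tr}(\beta^2)]$.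
   Context: A density matrix is a positive semidefinite operator of unit trace. *)

From HB Require Import structures.
From mathcomp Require Import all_boot all_order all_algebra.
Set Implicit Arguments. Unset Strict Implicit. Unset Printing Implicit Defensive.
Import Order.TTheory GRing.Theory Num.Theory.
Local Open Scope ring_scope.

(* Finite-dimensional complex Hilbert space: C^d with C any numClosedFieldType
   (e.g. algC or R[i] for a real closed field R), standard inner product. *)

Definition adjmx (C : numClosedFieldType) (m n : nat) (A : 'M[C]_(m, n)) : 'M[C]_(n, m) :=
  (map_mx Num.conj A)^T.

Definition psd (C : numClosedFieldType) (d : nat) (A : 'M[C]_d) : Prop :=
  forall x : 'cV[C]_d, 0 <= (adjmx x *m A *m x) 0 0.

Definition density (C : numClosedFieldType) (d : nat) (A : 'M[C]_d) : Prop :=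
  psd A /\ \tr A = 1.

Definition F2 (C : numClosedFieldType) (d : nat) (a b : 'M[C]_d) : C :=
  let ta := \tr (a *m a) in
  let tb := \tr (b *m b) in
  \tr (a *m b) / (if ta < tb then tb else ta).

From HB Require Import structures.
From mathcomp Require Import all_boot all_order all_algebra.
From mathcomp Require Import ring.
Import Order.TTheory GRing.Theory Num.Theory.
Local Open Scope ring_scope.

(* Since rho_j rho_0 = 0, tr(rho_j sigma_j) = (1 - eps) tr(rho_j^2), and the purity
   hypothesis makes tr(rho_j^2) the maximum in the denominator of F_2, so
   F_2(rho_j, sigma_j) = 1 - eps as soon as tr(rho_j^2) > 0.  This positivity holds
   for every density matrix: a positive semidefinite matrix is hermitian (its
   quadratic form is real, and a complex quadratic form determines the matrix),
   so tr(A^2) = tr(A adj A) = sum |A_ik|^2, which vanishes only for A = 0.  The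
   averaged states have the same shape, sigma = eps rho_0 + (1 - eps) rho with
   rho rho_0 = 0 and rho a density matrix, so the same computation applies. *)

Section Adjoint.
Context {C : numClosedFieldType}.

Lemma adjmxK {m n} (A : 'M[C]_(m, n)) : adjmx (adjmx A) = A.
Proof. by apply/matrixP => i j; rewrite !mxE conjCK. Qed.

Lemma adjmxD {m n} (A B : 'M[C]_(m, n)) : adjmx (A + B) = adjmx A + adjmx B.
Proof. by apply/matrixP => i j; rewrite !mxE rmorphD. Qed.

Lemma adjmxZ {m n} (c : C) (A : 'M[C]_(m, n)) : adjmx (c *: A) = c^* *: adjmx A.
Proof. by apply/matrixP => i j; rewrite !mxE rmorphM. Qed.

Lemma adjmxM {m n p} (A : 'M[C]_(m, n)) (B : 'M[C]_(n, p)) :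
  adjmx (A *m B) = adjmx B *m adjmx A.
Proof. by rewrite /adjmx map_mxM trmx_mul. Qed.

Lemma adjmx_delta {m n} (i : 'I_m) (j : 'I_n) :
  adjmx (delta_mx i j : 'M[C]_(m, n)) = delta_mx j i.
Proof. by apply/matrixP => a b; rewrite !mxE rmorph_nat andbC. Qed.

Lemma mxtrace_mul_adjmx n (A : 'M[C]_n) :
  \tr (A *m adjmx A) = \sum_i \sum_j A i j * (A i j)^*.
Proof. by apply: eq_bigr => i _; rewrite mxE; apply: eq_bigr => j _; rewrite !mxE. Qed.

Lemma mxtrace_mul_adjmx_gt0 n (A : 'M[C]_n) : A != 0 -> 0 < \tr (A *m adjmx A).
Proof.
move=> A_neq0; rewrite mxtrace_mul_adjmx pair_bigA /= lt_def.
rewrite sumr_ge0 ?andbT => [|ij _]; last exact: mul_conjC_ge0.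
apply: contra A_neq0 => /eqP sum_eq0; apply/eqP/matrixP => i j; rewrite mxE.
apply/eqP; rewrite -mul_conjC_eq0.
by rewrite (psumr_eq0P (fun ij _ => mul_conjC_ge0 _) sum_eq0 (i := (i, j))).
Qed.

End Adjoint.

Section QuadraticForm.
Context {C : numClosedFieldType} {d : nat}.
Local Notation e i := (delta_mx i 0 : 'cV[C]_d).

Definition qform (A : 'M[C]_d) (x : 'cV[C]_d) : C := (adjmx x *m A *m x) 0 0.

Lemma form_delta (A : 'M[C]_d) i k : (adjmx (e i) *m A *m e k) 0 0 = A i k.
Proof. by rewrite adjmx_delta -rowE -colE !mxE. Qed.

Lemma qformB (A B : 'M[C]_d) x : qform (A - B) x = qform A x - qform B x.
Proof. by rewrite /qform mulmxBr mulmxBl !mxE. Qed.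

Lemma conj_qform (A : 'M[C]_d) x : (qform A x)^* = qform (adjmx A) x.
Proof.
by rewrite /qform -[x in RHS]adjmxK -!adjmxM -mulmxA adjmxK !mxE.
Qed.

Lemma qform_delta_add (A : 'M[C]_d) i k (c : C) :
  qform A (e i + c *: e k) =
  A i i + c * A i k + c^* * A k i + c^* * c * A k k.
Proof.
rewrite -(form_delta A i i) -(form_delta A i k) -(form_delta A k i).
rewrite -(form_delta A k k) /qform adjmxD adjmxZ.
rewrite !(mulmxDl, mulmxDr) -!scalemxAl -!scalemxAr !mxE; ring.
Qed.

Lemma qform_eq0 (B : 'M[C]_d) : (forall x, qform B x = 0) -> B = 0.
Proof.
move=> B0; apply/matrixP => i k; rewrite mxE.
(* Polarization along e_i + c e_k for c = 1 and c = 'i. *)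
have Bjj j : B j j = 0 by rewrite -form_delta; apply: B0.
have := B0 (e i + 1 *: e k).
rewrite qform_delta_add !Bjj conjC1 !mul1r add0r addr0 => antisymB.
have := B0 (e i + 'i *: e k).
rewrite qform_delta_add !Bjj conjCi mulr0 add0r addr0 mulNr -mulrBr => /eqP.
rewrite mulf_eq0 (negPf (neq0Ci C)) subr_eq0 /= => /eqP symB.
apply/eqP; move: (mulrn_eq0 (B i k) 2).
by rewrite mulr2n {2}symB antisymB eqxx.
Qed.

Lemma psd_adjmx (A : 'M[C]_d) : psd A -> adjmx A = A.
Proof.
move=> psdA; apply/eqP; rewrite -subr_eq0; apply/eqP/qform_eq0 => x.
by rewrite qformB -conj_qform conj_Creal ?subrr ?ger0_real //; apply: psdA.
Qed.

Lemma density_tr_sq_gt0 (A : 'M[C]_d) : density A -> 0 < \tr (A *m A).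
Proof.
case=> psdA trA; rewrite -{2}(psd_adjmx _ psdA) mxtrace_mul_adjmx_gt0 //.
by apply: contra_eq_neq trA => ->; rewrite linear0 eq_sym oner_neq0.
Qed.

End QuadraticForm.

Section Mixture.
Context {C : numClosedFieldType} {d : nat}.
Local Notation mix eps a0 a := (eps *: a0 + (1 - eps) *: a).

Lemma F2_eq_ratio (a b : 'M[C]_d) k :
  0 < \tr (a *m a) -> \tr (b *m b) <= \tr (a *m a) ->
  \tr (a *m b) = k * \tr (a *m a) -> F2 a b = k.
Proof. by move=> aa_gt0 bb_le trab; rewrite /F2 /= le_gtF // trab mulfK ?gt_eqF. Qed.

Lemma F2_orthogonal_mix (a a0 : 'M[C]_d) eps :
  density a -> a *m a0 = 0 ->
  \tr (mix eps a0 a *m mix eps a0 a) <= \tr (a *m a) ->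
  F2 a (mix eps a0 a) = 1 - eps.
Proof.
move=> dens_a orth_a le_tr; apply: F2_eq_ratio => //; first exact: density_tr_sq_gt0.
by rewrite mulmxDr -!scalemxAr orth_a scaler0 add0r mxtraceZ.
Qed.

Lemma density_convex {I : finType} (r : I -> 'M[C]_d) (p : I -> C) :
  (forall j, density (r j)) -> (forall j, 0 <= p j) -> \sum_j p j = 1 ->
  density (\sum_j p j *: r j).
Proof.
move=> dens_r p_ge0 p_sum1; split.
  move=> x; rewrite mulmx_sumr mulmx_suml summxE.
  apply: sumr_ge0 => j _; rewrite -scalemxAr -scalemxAl mxE.
  by apply: mulr_ge0 => //; apply: (dens_r j).1.
rewrite linear_sum /= -[RHS]p_sum1; apply: eq_bigr => j _.
by rewrite mxtraceZ (dens_r j).2 mulr1.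
Qed.

Lemma sum_mix {I : finType} (r : I -> 'M[C]_d) (p : I -> C) eps a0 :
  \sum_j p j = 1 -> \sum_j p j *: mix eps a0 (r j) = mix eps a0 (\sum_j p j *: r j).
Proof.
move=> p_sum1; under eq_bigr do rewrite scalerDr !scalerA.
rewrite big_split /= -scaler_suml -mulr_suml p_sum1 mul1r scaler_sumr.
by congr (_ + _); apply: eq_bigr => j _; rewrite scalerA mulrC.
Qed.

End Mixture.

Theorem mainTheorem10 (C : numClosedFieldType) (d n : nat)
  (rho0 : 'M[C]_d) (rho : 'I_n -> 'M[C]_d) (p : 'I_n -> C) (eps : C) :
  density rho0 ->
  (forall j, density (rho j)) ->
  (forall j, rho j *m rho0 = 0 /\ rho0 *m rho j = 0) ->
  (forall j, 0 <= p j) ->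
  \sum_(j < n) p j = 1 ->
  0 <= eps <= 1 ->
  let sigma := fun j => eps *: rho0 + (1 - eps) *: rho j in
  let rhoS := \sum_(j < n) p j *: rho j in
  let sigmaS := \sum_(j < n) p j *: sigma j in
  (forall j, \tr (sigma j *m sigma j) <= \tr (rho j *m rho j)) ->
  \tr (sigmaS *m sigmaS) <= \tr (rhoS *m rhoS) ->
  \sum_(j < n) p j * F2 (rho j) (sigma j) = F2 rhoS sigmaS /\
  F2 rhoS sigmaS = 1 - eps.
Proof.
move=> _ dens_rho orth p_ge0 p_sum1 _ sigma rhoS sigmaS le_sigma le_sigmaS.
have F2_j j : F2 (rho j) (sigma j) = 1 - eps.
  exact: F2_orthogonal_mix (dens_rho j) (orth j).1 (le_sigma j).
have sigmaSE : sigmaS = eps *: rho0 + (1 - eps) *: rhoS by exact: sum_mix.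
have orth_rhoS : rhoS *m rho0 = 0.
  by rewrite mulmx_suml big1 // => j _; rewrite -scalemxAl (orth j).1 scaler0.
have F2_S : F2 rhoS sigmaS = 1 - eps.
  rewrite sigmaSE; apply: F2_orthogonal_mix => //; last by rewrite -sigmaSE.
  exact: density_convex.
split=> //; under eq_bigr do rewrite F2_j.
by rewrite -mulr_suml p_sum1 mul1r.
Qed.
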